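(* Fix a nonempty $A\subseteq S$ and $w\in A$, and let $E_0=\{\tau_{\mathcal E_N^w}=\tau_{\mathcal E_N(A)}\}$. Let $x,y\in S$ be distinct with $r(x,y)>r(y,x)>0$, and let $q_{x,y}=r(y,x)/r(x,y)$. Then, as $N\to\infty$, $$\Big|\mathbb P_{\zeta_1^{x,y}}[E_0]-\frac{q_{x,y}-q_{x,y}^N}{1-q_{x,y}^N}\mathbb P_{\xi_N^x}[E_0]-\frac{1-q_{x,y}}{1-q_{x,y}^N}\mathbb P_{\xi_N^y}[E_0]\Big|=O(d_N\log N)$$ and $$\Big|\mathbb P_{\zeta_{N-1}^{x,y}}[E_0]-\frac{q_{x,y}^{N-1}-q_{x,y}^N}{1-q_{x,y}^N}\mathbb P_{\xi_N^x}[E_0]-\frac{1-q_{x,y}^{N-1}}{1-q_{x,y}^N}\mathbb P_{\xi_N^y}[E_0]\Big|=O(d_N\log N).$$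
   Context: $S$ is finite; $r:S\times S\to[0,\infty)$, $r(x,x)=0$, are the rates of an irreducible continuous-time Markov chain on $S$. $\mathcal H_N=\{\eta\in\{0,1,2,\dots\}^S:\sum_x\eta_x=N\}$; $\sigma^{x,y}\eta$ moves one particle from $x$ to $y$ (if $\eta_x\ge1$; else $\sigma^{x,y}\eta=\eta$). With $d_N>0$, $d_N\to0$, the inclusion process is the Markov chain on $\mathcal H_N$ with generator $(\mathcal L_NF)(\eta)=\sum_{x\ne y}\eta_x(d_N+\eta_y)r(x,y)\{F(\sigma^{x,y}\eta)-F(\eta)\}$; $\mathbb P_\eta$ its law from $\eta$; $\tau_{\mathcal C}$ the hitting time of $\mathcal C\subseteq\mathcal H_N$. $\xi_N^z$: all $N$ particles at $z$; $\mathcal E_N^z=\{\xi_N^z\}$, $\mathcal E_N(A)=\bigcup_{z\in A}\mathcal E_N^z$. For $0\le i\le N$, $\zeta_i^{x,y}$ is the configuration with $N-i$ particles at $x$, $i$ at $y$, none elsewhere (so $\zeta_0^{x,y}=\xi_N^x$, $\zeta_N^{x,y}=\xi_N^y$). $O(\cdot)$ has constant independent of $N$. *)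

From HB Require Import structures.
From mathcomp Require Import all_boot all_order all_algebra.
From mathcomp Require Import all_classical all_reals all_analysis.
Set Implicit Arguments. Unset Strict Implicit. Unset Printing Implicit Defensive.
Import Order.TTheory GRing.Theory Num.Theory.
Import numFieldNormedType.Exports.
Local Open Scope ring_scope.

Section Inclusion.
Variables (R : realType) (S : finType).

(* Configurations eta : S -> nat (elements of H_N are those with total mass N). *)
Definition config := {ffun S -> nat}.

Definition irreducible_rates (r : S -> S -> R) : Prop :=
  forall a b : S, connect [rel u v | 0 < r u v] a b.

Definition xi (N : nat) (z : S) : config :=
  [ffun s => if s == z then N else 0%N].

Definition zeta (N i : nat) (x y : S) : config :=
  [ffun s => if s == x then (N - i)%N else if s == y then i else 0%N].

Definition sigma (a b : S) (eta : config) : config :=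
  if (0 < eta a)%N then
    [ffun s => ((eta s - (s == a)) + (s == b))%N]
  else eta.

Definition rate (dN : R) (r : S -> S -> R) (eta : config) (a b : S) : R :=
  (eta a)%:R * (dN + (eta b)%:R) * r a b.

Definition out_rate (dN : R) (r : S -> S -> R) (eta : config) : R :=
  \sum_(a : S) \sum_(b : S | b != a) rate dN r eta a b.

Definition inE_A (N : nat) (A : {set S}) (eta : config) : bool :=
  [exists z in A, eta == xi N z].

(* hitp n eta = P_eta[ the jump chain first enters E_N(A) at step n,
   and does so at xi_N^w ]. *)
Fixpoint hitp (dN : R) (r : S -> S -> R) (N : nat) (A : {set S}) (w : S)
    (n : nat) (eta : config) : R :=
  match n with
  | 0%N => if eta == xi N w then 1 else 0
  | n'.+1 =>
      if inE_A N A eta then 0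
      else \sum_(a : S) \sum_(b : S | b != a)
             (rate dN r eta a b / out_rate dN r eta) *
             hitp dN r N A w n' (sigma a b eta)
  end.

(* P_eta[E_0] = P_eta[ tau_{E_N^w} = tau_{E_N(A)} ] for the inclusion process
   with parameter d_N = dN, computed as the sum over the (a.s. finite) step at
   which E_N(A) is first hit (the event only depends on the embedded jump chain). *)
Definition probE0 (dN : R) (r : S -> S -> R) (N : nat) (A : {set S}) (w : S)
    (eta : config) : R :=
  limn (series (fun n => hitp dN r N A w n eta)).

End Inclusion.

From HB Require Import structures.
From mathcomp Require Import all_boot all_order all_algebra.
From mathcomp Require Import all_classical all_reals all_analysis.
From mathcomp Require Import ring lra zify.
Set Implicit Arguments. Unset Strict Implicit. Unset Printing Implicit Defensive.
Import Order.TTheory GRing.Theory Num.Theory.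
Import numFieldNormedType.Exports.
Local Open Scope classical_set_scope.
Local Open Scope ring_scope.

(* For 1 <= i < N the configuration zeta_i lies outside E_N(A), so h_i := P_{zeta_i}[E_0]
   is harmonic for the embedded jump chain at zeta_i.  Only the jumps x -> y and y -> x
   keep the chain on the segment {zeta_j}; any other jump starts or ends at an empty
   site, so its rate is at most N d_N r(a,b).  Hence
     U_i (h_{i+1} - h_i) + D_i (h_{i-1} - h_i) = O(N d_N),
   U_i = (N-i)(d_N+i) r(x,y),  D_i = i(d_N+N-i) r(y,x).
   For d_N = 0 this is the gambler's ruin recursion with ratio q, solved by
   h_0 + c (1 - q^i).  The increments eps_i of h minus that solution sum to zero and
   satisfy eps_{i+1} = lam_i eps_i + k_i with lam_i = D_i/U_i <= (1+q)/2 as soon as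
   q d_N <= (1-q)/2, and |k_i| = O(d_N (1/i + 1/(N-i))).  A contraction argument bounds
   eps_1 and eps_N, which are the two quantities of the theorem, by a multiple of
   sum_i |k_i| = O(d_N log N). *)

Lemma sum_harmonic_le_1Dln (R : realType) (n : nat) : (1 <= n)%N ->
  \sum_(1 <= i < n.+1) (i%:R : R)^-1 <= 1 + ln (n%:R : R).
Proof.
elim: n => [//|[|n] IH] _; first by rewrite big_nat1 invr1 ln1 addr0.
rewrite big_nat_recr //=.
suff step : (n.+2%:R : R)^-1 <= ln n.+2%:R - ln n.+1%:R.
  by apply: le_trans (lerD (IH isT) step) _; rewrite addrA addrAC addrK.
have ratio : 1 - (n.+2%:R : R)^-1 = n.+1%:R / n.+2%:R.
  by rewrite -[n.+2%:R]natr1; field; apply/lt0r_neq0; have := ler0n R n; lra.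
have := @le_ln1Dx R (- (n.+2%:R)^-1).
rewrite ltrN2 invf_lt1 ?ltr1n // ratio ln_div ?posrE ?ltr0n // => /(_ isT) ln_le.
by rewrite -opprB lerNr.
Qed.

Lemma sum_inv_sym_le (R : realType) (n : nat) : (1 <= n)%N ->
  \sum_(1 <= i < n) ((i%:R : R)^-1 + ((n - i)%:R)^-1) <= 2 * (1 + ln (n%:R : R)).
Proof.
move=> n1; rewrite big_split /=.
have -> : \sum_(1 <= i < n) ((n - i)%:R : R)^-1 = \sum_(1 <= i < n) (i%:R : R)^-1.
  rewrite big_nat_rev !big_nat; apply: eq_bigr => i /andP[_ iN].
  by rewrite add1n subSS subKn // ltnW.
suff : \sum_(1 <= i < n) (i%:R : R)^-1 <= 1 + ln n%:R by lra.
apply: le_trans (sum_harmonic_le_1Dln R n1).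
by rewrite big_nat_recr //= lerDl.
Qed.

Section Contraction.
Variables (R : realFieldType) (qq : R).
Hypotheses (qq_ge0 : 0 <= qq) (qq_le1 : qq <= 1).

Lemma sum_norm_le_of_contraction (n : nat) (b k : nat -> R) :
  b 1%N = 0 ->
  (forall i, (1 <= i < n)%N -> `|b i.+1| <= qq * `|b i| + `|k i|) ->
  (1 - qq) * \sum_(1 <= i < n.+1) `|b i| <= \sum_(1 <= i < n) `|k i|.
Proof.
move=> b1; case: n => [|n] hb; first by rewrite !big_geq // mulr0.
set B := \sum_(1 <= i < n.+2) _; set s := \sum_(1 <= i < n.+1) `|b i|.
have B_shift : B = \sum_(1 <= i < n.+1) `|b i.+1|.
  by rewrite /B big_nat_recl //= b1 normr0 add0r.
have s_le_B : s <= B by rewrite /B big_nat_recr //= lerDl.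
have : B <= qq * s + \sum_(1 <= i < n.+1) `|k i|.
  by rewrite B_shift mulr_sumr -big_split /=; apply: ler_sum_nat => i /hb.
have : qq * s <= qq * B by exact: ler_wpM2l.
lra.
Qed.

Lemma zero_sum_contraction_bound (n : nat) (eps lam : nat -> R) :
  (1 <= n)%N ->
  (forall i, (1 <= i < n)%N -> 0 <= lam i <= qq) ->
  \sum_(1 <= i < n.+1) eps i = 0 ->
  let K := \sum_(1 <= i < n) `|eps i.+1 - lam i * eps i| in
  (1 - qq) * `|eps 1%N| <= K /\ (1 - qq) * `|eps n| <= 2 * K.
Proof.
move=> n1 hlam sum0 K.
pose L i := \prod_(1 <= j < i) lam j.
pose b i := eps i - L i * eps 1%N.
have L1 : L 1%N = 1 by rewrite /L big_geq.
have lam01 j : (1 <= j < n)%N -> 0 <= lam j <= 1.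
  by move=> /hlam /andP[l0 lq]; rewrite l0 (le_trans lq).
have L01 i : (i <= n)%N -> 0 <= L i <= 1.
  move=> iN; have lam01' j : (1 <= j < i)%N && true -> 0 <= lam j <= 1.
    by rewrite andbT => /andP[j1 ji]; apply: lam01; rewrite j1 (leq_trans ji iN).
  by rewrite /L big_nat_cond prodr_ge0 ?prodr_ile1 // => j /lam01' /andP[].
have b_step i : (1 <= i < n)%N ->
    `|b i.+1| <= qq * `|b i| + `|eps i.+1 - lam i * eps i|.
  move=> iP; have /andP[l0 lq] := hlam i iP; case/andP: iP => i1 _.
  have -> : b i.+1 = lam i * b i + (eps i.+1 - lam i * eps i).
    by rewrite /b /L big_nat_recr //=; ring.
  apply: le_trans (ler_normD _ _) _.
  by rewrite normrM ger0_norm // lerD2r ler_wpM2r.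
set B := \sum_(1 <= i < n.+1) `|b i|.
have hB : (1 - qq) * B <= K.
  by apply: sum_norm_le_of_contraction b_step; rewrite /b L1 mul1r subrr.
have eps1_le_B : `|eps 1%N| <= B.
  have sumL_ge1 : 1 <= \sum_(1 <= i < n.+1) L i.
    rewrite big_nat_recl // L1 lerDl big_nat sumr_ge0 // => i /andP[_ iN].
    by case/andP: (L01 i.+1 iN).
  have split_sum : \sum_(1 <= i < n.+1) eps i =
      eps 1%N * \sum_(1 <= i < n.+1) L i + \sum_(1 <= i < n.+1) b i.
    by rewrite mulr_sumr -big_split /=; apply: eq_bigr => i _; rewrite /b; ring.
  have : eps 1%N * \sum_(1 <= i < n.+1) L i = - \sum_(1 <= i < n.+1) b i.
    by apply/eqP; rewrite -addr_eq0 -split_sum sum0.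
  move=> /(congr1 Num.norm); rewrite normrN normrM (ger0_norm (le_trans ler01 sumL_ge1)).
  move=> eq_norm; apply: le_trans (ler_norm_sum _ _ _).
  by rewrite -eq_norm ler_peMr.
have epsn_le_2B : `|eps n| <= 2 * B.
  have /andP[Ln0 Ln1] := L01 n (leqnn n).
  have bn_le_B : `|b n| <= B by rewrite /B big_nat_recr //= lerDr sumr_ge0.
  have : `|L n * eps 1%N| <= `|eps 1%N| by rewrite normrM ger0_norm // ler_piMl.
  have -> : eps n = L n * eps 1%N + b n by rewrite /b; ring.
  move=> Le1; apply: le_trans (ler_normD _ _) _; lra.
have qq' : 0 <= 1 - qq by rewrite subr_ge0.
split; first exact: le_trans (ler_wpM2l qq' eps1_le_B) hB.
apply: le_trans (ler_wpM2l qq' epsn_le_2B) _; lra.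
Qed.

End Contraction.

Section HittingProbability.
Variables (R : realType) (S : finType) (r : S -> S -> R) (dN : R) (N : nat)
  (A : {set S}) (w : S).
Hypotheses (r_ge0 : forall a b, 0 <= r a b) (dN_ge0 : 0 <= dN) (wA : w \in A).

Local Notation hp n eta := (hitp dN r N A w n eta).
Local Notation h eta := (probE0 dN r N A w eta).
Local Notation jump eta a b := (rate dN r eta a b / out_rate dN r eta).

Lemma rate_ge0 eta a b : 0 <= rate dN r eta a b.
Proof. by rewrite /rate !mulr_ge0 ?addr_ge0. Qed.

Lemma out_rate_ge0 eta : 0 <= out_rate dN r eta.
Proof. by rewrite !sumr_ge0 // => a _; rewrite sumr_ge0 // => b _; exact: rate_ge0. Qed.

Lemma jump_ge0 eta a b : 0 <= jump eta a b.
Proof. by rewrite divr_ge0 ?rate_ge0 ?out_rate_ge0. Qed.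

Lemma sum_jump_le1 eta : \sum_a \sum_(b | b != a) jump eta a b <= 1.
Proof.
have -> : \sum_a \sum_(b | b != a) jump eta a b = out_rate dN r eta / out_rate dN r eta.
  by rewrite /out_rate mulr_suml; apply: eq_bigr => a _; rewrite mulr_suml.
by have [->|/divff ->] := eqVneq (out_rate dN r eta) 0; rewrite ?mul0r.
Qed.

Lemma xi_inE : inE_A N A (xi N w).
Proof. by apply/existsP; exists w; rewrite wA /=. Qed.

Lemma hitp_ge0 n eta : 0 <= hp n eta.
Proof.
elim: n eta => [|n IH] eta /=; first by case: ifP.
case: ifP => // _; rewrite sumr_ge0 // => a _; rewrite sumr_ge0 // => b _.
by rewrite mulr_ge0 ?jump_ge0.
Qed.

Lemma hitp0_notin eta : ~~ inE_A N A eta -> hp 0%N eta = 0.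
Proof. by move=> notin /=; case: eqP => // eta_xi; rewrite eta_xi xi_inE in notin. Qed.

Lemma series_hitpS M eta :
  series (fun n => hp n eta) M.+1 = hp 0%N eta +
   (if inE_A N A eta then 0 else
    \sum_a \sum_(b | b != a) jump eta a b * series (fun n => hp n (sigma a b eta)) M).
Proof.
rewrite /series /= big_nat_recl //=; congr (_ + _).
case: ifP => _; first by rewrite big1.
rewrite exchange_big /=; apply: eq_bigr => a _.
by rewrite exchange_big /=; apply: eq_bigr => b _; rewrite mulr_sumr.
Qed.

Lemma series_hitp_ge0_le1 M eta : 0 <= series (fun n => hp n eta) M <= 1.
Proof.
elim: M eta => [|M IH] eta; first by rewrite /series /= big_geq // lexx ler01.
rewrite series_hitpS; case: ifPn => hin.
  by rewrite addr0 /=; case: ifP; rewrite ?lexx ?ler01.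
rewrite hitp0_notin // add0r; apply/andP; split.
  rewrite sumr_ge0 // => a _; rewrite sumr_ge0 // => b _.
  by rewrite mulr_ge0 ?jump_ge0 //; case/andP: (IH (sigma a b eta)).
apply: le_trans (sum_jump_le1 eta); apply: ler_sum => a _; apply: ler_sum => b _.
have /andP[_ le1] := IH (sigma a b eta).
by rewrite -[leRHS]mulr1 ler_wpM2l ?jump_ge0.
Qed.

Lemma cvgn_series_hitp eta : cvgn (series (fun n => hp n eta)).
Proof.
apply: nondecreasing_is_cvgn.
  by apply: nondecreasing_series => n _ _; exact: hitp_ge0.
by exists 1 => _ [M _ <-]; case/andP: (series_hitp_ge0_le1 M eta).
Qed.

Lemma probE0_ge0_le1 eta : 0 <= h eta <= 1.
Proof.
have bound M := andP (series_hitp_ge0_le1 M eta).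
rewrite /probE0; apply/andP; split.
  by apply: limr_ge; [exact: cvgn_series_hitp | apply: nearW => M; case: (bound M)].
by apply: limr_le; [exact: cvgn_series_hitp | apply: nearW => M; case: (bound M)].
Qed.

Lemma probE0_harmonic eta : ~~ inE_A N A eta ->
  h eta = \sum_a \sum_(b | b != a) jump eta a b * h (sigma a b eta).
Proof.
move=> notin; apply: cvg_lim => //; rewrite -cvg_shiftS /=.
under eq_fun do rewrite series_hitpS (negbTE notin) hitp0_notin // add0r.
apply: cvg_big => [|a _]; first exact: add_continuous.
apply: cvg_big => [|b _]; first exact: add_continuous.
by apply: cvgMl_tmp; exact: cvgn_series_hitp.
Qed.

Lemma probE0_balance eta : ~~ inE_A N A eta -> out_rate dN r eta != 0 ->
  \sum_a \sum_(b | b != a) rate dN r eta a b * (h (sigma a b eta) - h eta) = 0.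
Proof.
move=> notin out_neq0.
under eq_bigr do under eq_bigr do rewrite mulrBr.
under eq_bigr do rewrite sumrB.
have out_h : \sum_a \sum_(b | b != a) rate dN r eta a b * h eta = out_rate dN r eta * h eta.
  by rewrite /out_rate mulr_suml; apply: eq_bigr => a _; rewrite mulr_suml.
apply/eqP; rewrite sumrB out_h subr_eq0; apply/eqP.
rewrite [in RHS]probE0_harmonic // mulr_sumr; apply: eq_bigr => a _.
rewrite mulr_sumr; apply: eq_bigr => b _.
by rewrite mulrA mulrCA divff // mulr1.
Qed.

End HittingProbability.

Section Segment.
Variables (R : realType) (S : finType) (r : S -> S -> R) (dN : R) (N : nat)
  (A : {set S}) (w x y : S).
Hypotheses (r_ge0 : forall a b, 0 <= r a b) (dN_ge0 : 0 <= dN) (wA : w \in A).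
Hypotheses (xy : x != y) (rxy_gt0 : 0 < r x y).

Local Notation z i := (zeta N i x y).
Local Notation h eta := (probE0 dN r N A w eta).

Lemma zeta_x i : z i x = (N - i)%N. Proof. by rewrite ffunE eqxx. Qed.

Lemma zeta_y i : z i y = i. Proof. by rewrite ffunE eq_sym (negbTE xy) eqxx. Qed.

Lemma zeta_other i s : s != x -> s != y -> z i s = 0%N.
Proof. by move=> /negbTE sx /negbTE sy; rewrite ffunE sx sy. Qed.

Lemma zeta0E : z 0%N = xi N x.
Proof. by apply/ffunP => s; rewrite !ffunE subn0; case: eqP => // _; case: eqP. Qed.

Lemma zetaNE : z N = xi N y.
Proof.
apply/ffunP => s; rewrite !ffunE subnn.
by have [->|] := eqVneq s x; rewrite ?(negbTE xy) // => _; case: eqP.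
Qed.

Lemma zeta_le i s : (i <= N)%N -> (z i s <= N)%N.
Proof.
move=> iN.
have [->|sx] := eqVneq s x; first by rewrite zeta_x leq_subr.
have [->|sy] := eqVneq s y; first by rewrite zeta_y.
by rewrite zeta_other.
Qed.

Lemma zeta_notinE i : (1 <= i < N)%N -> ~~ inE_A N A (z i).
Proof.
move=> /andP[i1 iN]; apply/existsP => -[u /andP[_ /eqP zi_xi]].
have := congr1 (fun f : config S => f x) zi_xi.
have := congr1 (fun f : config S => f y) zi_xi.
rewrite /= zeta_x zeta_y !ffunE.
case: eqP => [<-|_]; last by lia.
by rewrite (negbTE xy); lia.
Qed.

Lemma sigma_xy_zeta i : (i < N)%N -> sigma x y (z i) = z i.+1.
Proof.
move=> iN; rewrite /sigma zeta_x subn_gt0 iN; apply/ffunP => s; rewrite !ffunE.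
have [->|sx] := eqVneq s x; first by rewrite (negbTE xy) /=; lia.
by case: eqP => _ /=; lia.
Qed.

Lemma sigma_yx_zeta i : (1 <= i <= N)%N -> sigma y x (z i) = z i.-1.
Proof.
move=> /andP[i1 iN]; rewrite /sigma zeta_y i1; apply/ffunP => s; rewrite !ffunE.
have [->|sx] := eqVneq s x; first by rewrite (negbTE xy) /=; lia.
by case: eqP => _ /=; lia.
Qed.

Lemma rate_zeta_xy i : rate dN r (z i) x y = (N - i)%:R * (dN + i%:R) * r x y.
Proof. by rewrite /rate zeta_x zeta_y. Qed.

Lemma rate_zeta_yx i : rate dN r (z i) y x = i%:R * (dN + (N - i)%:R) * r y x.
Proof. by rewrite /rate zeta_x zeta_y. Qed.

Lemma rate_zeta_le i a b : (i <= N)%N -> b != a -> (a, b) != (x, y) -> (a, b) != (y, x) ->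
  rate dN r (z i) a b <= N%:R * dN * r a b.
Proof.
move=> iN ba axy ayx.
have z_eq0 : z i a = 0%N \/ z i b = 0%N.
  have [ea|ax] := eqVneq a x.
    right; rewrite ea in ba axy; apply: zeta_other => //.
    by apply: contra axy => /eqP ->.
  have [ea|ay] := eqVneq a y; last by left; apply: zeta_other.
  right; rewrite ea in ba ayx; apply: zeta_other => //.
  by apply: contra ayx => /eqP ->.
rewrite /rate; case: z_eq0 => ->; first by rewrite !mul0r mulr_ge0 ?mulr_ge0.
by rewrite addr0 ler_wpM2r // ler_wpM2r // ler_nat zeta_le.
Qed.

Lemma probE0_zeta_balance i : (1 <= i < N)%N ->
  `|(N - i)%:R * (dN + i%:R) * r x y * (h (z i.+1) - h (z i)) +
    i%:R * (dN + (N - i)%:R) * r y x * (h (z i.-1) - h (z i))|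
  <= N%:R * dN * \sum_(ab : S * S) r ab.1 ab.2.
Proof.
move=> iP; have /andP[i1 iN] := iP.
have iP' : (1 <= i <= N)%N by rewrite i1 ltnW.
have rate_xy_gt0 : 0 < rate dN r (z i) x y.
  by rewrite rate_zeta_xy !mulr_gt0 ?ltr0n ?subn_gt0 // ltr_wpDl ?ltr0n.
have out_gt0 : 0 < out_rate dN r (z i).
  rewrite /out_rate pair_big_dep (bigD1 (x, y)) /=; last by rewrite eq_sym.
  by rewrite ltr_wpDr // sumr_ge0 // => ab _; exact: rate_ge0.
have := probE0_balance r_ge0 dN_ge0 wA (zeta_notinE iP) (lt0r_neq0 out_gt0).
rewrite pair_big_dep (bigD1 (x, y)) /=; last by rewrite eq_sym.
rewrite (bigD1 (y, x)) /=; last by rewrite xy xpair_eqE negb_and eq_sym xy.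
rewrite (sigma_xy_zeta iN) (sigma_yx_zeta iP') rate_zeta_xy rate_zeta_yx.
set F := \sum_(ab | _) _; move/eqP; rewrite addrA addr_eq0 => /eqP ->.
rewrite normrN; apply: le_trans (ler_norm_sum _ _ _) _.
apply: (@le_trans _ _ (\sum_(ab | (ab.2 != ab.1) && (ab != (x, y)) && (ab != (y, x)))
     N%:R * dN * r ab.1 ab.2)).
  apply: ler_sum => -[a b] /= /andP[/andP[ba axy] ayx].
  rewrite normrM ger0_norm ?rate_ge0 //.
  apply: le_trans (rate_zeta_le (ltnW iN) ba axy ayx).
  rewrite -[leRHS]mulr1 ler_wpM2l ?rate_ge0 //.
  have /andP[? ?] := probE0_ge0_le1 N r_ge0 dN_ge0 wA (sigma a b (z i)).
  have /andP[? ?] := probE0_ge0_le1 N r_ge0 dN_ge0 wA (z i).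
  by rewrite ler_norml; apply/andP; split; lra.
rewrite mulr_sumr big_mkcond /=; apply: ler_sum => ab _.
by case: ifP => // _; rewrite !mulr_ge0.
Qed.

End Segment.

Lemma down_rate_le_up_rate (R : realFieldType) (q d a b : R) :
  0 <= q -> 0 <= d -> 1 <= a -> 0 <= b -> q * d <= (1 - q) / 2 ->
  b * (d + a) * q <= (1 + q) / 2 * (a * (d + b)).
Proof.
move=> q0 d0 a1 b0 qd.
have half_gap_ge0 : 0 <= (1 - q) / 2 := le_trans (mulr_ge0 q0 d0) qd.
have gap : q * d <= (1 - q) / 2 * a by apply: (le_trans qd); rewrite ler_peMr.
have : 0 <= b * ((1 - q) / 2 * a - q * d) by rewrite mulr_ge0 ?subr_ge0.
have : 0 <= (1 + q) / 2 * a * d by rewrite !mulr_ge0 ?divr_ge0 ?addr_ge0 // (le_trans ler01).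
nra.
Qed.

Section PerturbedRuin.
Variables (R : realType) (N : nat) (h : nat -> R) (d rxy q rho : R).
Hypotheses (N_gt0 : (0 < N)%N) (d_ge0 : 0 <= d) (rxy_gt0 : 0 < rxy).
Hypotheses (q_ge0 : 0 <= q) (q_lt1 : q < 1) (rho_ge0 : 0 <= rho).
Hypotheses (qd_small : q * d <= (1 - q) / 2).
Hypotheses (h0_01 : 0 <= h 0%N <= 1) (hN_01 : 0 <= h N <= 1).
Hypothesis h_balance : forall i, (1 <= i < N)%N ->
  `|(N - i)%:R * (d + i%:R) * rxy * (h i.+1 - h i) +
    i%:R * (d + (N - i)%:R) * (q * rxy) * (h i.-1 - h i)| <= N%:R * d * rho.

Let U i := (N - i)%:R * (d + i%:R) * rxy.
Let D i := i%:R * (d + (N - i)%:R) * (q * rxy).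
Let lam i := D i / U i.
Let c := (h N - h 0%N) / (1 - q ^+ N).
Let eps i := h i - h i.-1 - c * (1 - q) * q ^+ i.-1.

Lemma U_gt0 i : (1 <= i < N)%N -> 0 < U i.
Proof.
by case/andP=> i1 iN; rewrite !mulr_gt0 ?ltr0n ?subn_gt0 // ltr_wpDl ?ltr0n.
Qed.

Lemma lam_ge0_le i : (1 <= i < N)%N -> 0 <= lam i <= (1 + q) / 2.
Proof.
move=> iP; have U0 := U_gt0 iP; case/andP: iP => _ iN.
rewrite /lam divr_ge0 ?(ltW U0) ?mulr_ge0 ?addr_ge0 ?(ltW rxy_gt0) //= ler_pdivrMr // /D /U.
have := down_rate_le_up_rate q_ge0 d_ge0 (_ : 1 <= (N - i)%:R) (ler0n R i) qd_small.
rewrite ler1n subn_gt0 => /(_ iN) /(ler_wpM2r (ltW rxy_gt0)).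
by rewrite !mulrA.
Qed.

Lemma qexpN_le_q : q ^+ N <= q.
Proof.
by rewrite -(prednK N_gt0) exprS ler_piMr // exprn_ile1 // ltW.
Qed.

Lemma one_sub_qexpN_gt0 : 0 < 1 - q ^+ N.
Proof. by rewrite subr_gt0 (le_lt_trans qexpN_le_q). Qed.

Lemma sum_eps_eq0 : \sum_(1 <= i < N.+1) eps i = 0.
Proof.
pose e i := h i - c * (1 - q ^+ i).
have eps_e i : eps i.+1 = e i.+1 - e i by rewrite /eps /e /= exprS; ring.
rewrite big_add1 /= (eq_bigr _ (fun i _ => eps_e i)) telescope_sumr //.
rewrite /e expr0 subrr mulr0 subr0 /c divfK ?lt0r_neq0 ?one_sub_qexpN_gt0 //.
by ring.
Qed.

Lemma c_bound : `|c * (1 - q)| <= 1.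
Proof.
have hN_h0 : `|h N - h 0%N| <= 1.
  by case/andP: h0_01 => *; case/andP: hN_01 => *; rewrite ler_norml; apply/andP; split; lra.
have ratio01 : 0 <= (1 - q) / (1 - q ^+ N) <= 1.
  have qN := one_sub_qexpN_gt0; rewrite ler_pdivrMr // mul1r lerD2l lerN2 qexpN_le_q.
  by rewrite divr_ge0 ?(ltW qN) // subr_ge0 ltW.
case/andP: ratio01 => r0 r1.
by rewrite /c mulrAC -mulrA normrM (ger0_norm r0) mulr_ile1.
Qed.

Lemma eps_step_identity i : (1 <= i)%N ->
  U i * eps i.+1 - D i * eps i =
  (N - i)%:R * (d + i%:R) * rxy * (h i.+1 - h i) +
  i%:R * (d + (N - i)%:R) * (q * rxy) * (h i.-1 - h i) -
  c * (1 - q) * q ^+ i * rxy * d * ((N - i)%:R - i%:R).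
Proof. by case: i => // i _; rewrite /U /D /eps /= exprS; ring. Qed.

Lemma eps_step_bound i : (1 <= i < N)%N ->
  `|eps i.+1 - lam i * eps i| <= d * (rxy + rho) / rxy * (i%:R^-1 + (N - i)%:R^-1).
Proof.
move=> iP; have U0 := U_gt0 iP; have main_le := h_balance iP; case/andP: iP => i1 iN.
set a := (N - i)%:R in main_le *.
have a_gt0 : 0 < a by rewrite ltr0n subn_gt0.
have i_gt0 : 0 < i%:R :> R by rewrite ltr0n.
have aiN : a + i%:R = N%:R by rewrite -natrD subnK // ltnW.
have corr_le : `|c * (1 - q) * q ^+ i * rxy * d * (a - i%:R)| <= rxy * d * N%:R.
  rewrite (_ : _ * (a - i%:R) = c * (1 - q) * q ^+ i * (rxy * d * (a - i%:R))); last by ring.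
  rewrite normrM -[rxy * d * N%:R]mul1r ler_pM ?normr_ge0 //.
    rewrite normrM; apply: mulr_ile1 => //; first exact: c_bound.
    by rewrite ger0_norm ?exprn_ge0 // exprn_ile1 // ltW.
  rewrite normrM ger0_norm ?mulr_ge0 ?(ltW rxy_gt0) // ler_wpM2l ?mulr_ge0 ?(ltW rxy_gt0) //.
  by rewrite ler_norml; apply/andP; split; lra.
have -> : eps i.+1 - lam i * eps i = (U i * eps i.+1 - D i * eps i) / U i.
  by rewrite /lam; field; exact: lt0r_neq0.
rewrite eps_step_identity // normrM normfV (gtr0_norm U0) ler_pdivrMr //.
apply: le_trans (ler_normB _ _) _; apply: le_trans (lerD main_le corr_le) _.
have -> : d * (rxy + rho) / rxy * (i%:R^-1 + a^-1) * U i =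
    d * (rxy + rho) * N%:R * ((d + i%:R) / i%:R).
  by rewrite /U -/a -aiN; field; rewrite !lt0r_neq0.
have -> : N%:R * d * rho + rxy * d * N%:R = d * (rxy + rho) * N%:R by ring.
rewrite ler_peMr ?mulr_ge0 ?addr_ge0 ?(ltW rxy_gt0) //.
by rewrite ler_pdivlMr // mul1r lerDr.
Qed.

Lemma sum_eps_step_bound :
  \sum_(1 <= i < N) `|eps i.+1 - lam i * eps i|
    <= 2 * (d * (rxy + rho) / rxy) * (1 + ln N%:R).
Proof.
apply: le_trans (_ : \sum_(1 <= i < N) d * (rxy + rho) / rxy *
    (i%:R^-1 + (N - i)%:R^-1) <= _).
  by apply: ler_sum_nat => i; exact: eps_step_bound.
rewrite -mulr_sumr [leRHS]mulrAC [leRHS]mulrC ler_wpM2l ?sum_inv_sym_le //.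
by rewrite divr_ge0 ?mulr_ge0 ?addr_ge0 // ltW.
Qed.

Lemma eps_ends_bound : let K := 8 * (rxy + rho) / ((1 - q) * rxy) in
  `|eps 1%N| <= K * (d * (1 + ln N%:R)) /\ `|eps N| <= K * (d * (1 + ln N%:R)).
Proof.
(* [lra] does not use section hypotheses, so copy the needed ones into the context. *)
have q0 := q_ge0; have q1 := q_lt1.
have q'_ge0 : 0 <= (1 + q) / 2 by rewrite divr_ge0 ?addr_ge0.
have q'_le1 : (1 + q) / 2 <= 1 by rewrite ler_pdivrMr // mul1r; lra.
have := zero_sum_contraction_bound q'_ge0 q'_le1 N_gt0 lam_ge0_le sum_eps_eq0.
rewrite (_ : 1 - (1 + q) / 2 = (1 - q) / 2); last by field.
have := sum_eps_step_bound.
set S := \sum_(1 <= i < N) _; set Ck := d * _ / rxy; set L := 1 + ln _ => SB [e1 eN] K.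
have Ck_ge0 : 0 <= Ck by rewrite divr_ge0 ?mulr_ge0 ?addr_ge0 ?(ltW rxy_gt0).
have L_ge0 : 0 <= L by rewrite addr_ge0 // ln_ge0 // ler1n.
have CkL_ge0 := mulr_ge0 Ck_ge0 L_ge0.
have scaleK : (1 - q) * (K * (d * L)) = 8 * (Ck * L).
  by rewrite /K /Ck; field; rewrite !lt0r_neq0 // subr_gt0.
have q1' : 0 < 1 - q by rewrite subr_gt0.
by split; rewrite -(ler_pM2l q1') scaleK; lra.
Qed.

Lemma perturbed_ruin_bound : let K := 8 * (rxy + rho) / ((1 - q) * rxy) in
  `|h 1%N - (q - q ^+ N) / (1 - q ^+ N) * h 0%N - (1 - q) / (1 - q ^+ N) * h N|
    <= K * (d * (1 + ln N%:R)) /\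
  `|h N.-1 - (q ^+ N.-1 - q ^+ N) / (1 - q ^+ N) * h 0%N
    - (1 - q ^+ N.-1) / (1 - q ^+ N) * h N| <= K * (d * (1 + ln N%:R)).
Proof.
have qN_neq0 := lt0r_neq0 one_sub_qexpN_gt0.
rewrite (_ : h 1%N - _ - _ = eps 1%N); last by rewrite /eps /c /= expr0; field.
rewrite (_ : h N.-1 - _ - _ = - eps N); last first.
  have qNE : q ^+ N = q * q ^+ N.-1 by rewrite -exprS prednK.
  by rewrite /eps /c; move: qN_neq0; rewrite qNE => ?; field.
by rewrite normrN; exact: eps_ends_bound.
Qed.

End PerturbedRuin.

Lemma cvg0_eventually_mul_le (R : realType) (u : nat -> R) (a e : R) :
  u @ \oo --> 0 -> 0 < a -> 0 < e ->
  exists N0, forall N, (N0 <= N)%N -> a * u N <= e.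
Proof.
move=> u0 a_gt0 e_gt0.
have [N0 _ near_u] := @cvgr_dist_lt _ _ _ _ _ u 0 u0 _ (divr_gt0 e_gt0 a_gt0).
exists N0 => N /near_u; rewrite sub0r normrN => /ltW uN.
by rewrite -ler_pdivlMl // mulrC (le_trans (ler_norm _) uN).
Qed.

Lemma one_add_ln_le (R : realType) (N : nat) : (2 <= N)%N ->
  1 + ln (N%:R : R) <= ((ln 2)^-1 + 1) * ln N%:R.
Proof.
move=> N2; have ln2_gt0 : 0 < ln (2 : R) by rewrite ln_gt0 // ltr1n.
have ln2_le : ln (2 : R) <= ln N%:R by rewrite ler_ln ?posrE ?ltr0n ?ler_nat // (leq_trans _ N2).
by rewrite mulrDl mul1r lerD2r mulrC ler_pdivlMr // mul1r.
Qed.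

Theorem lemma4p8 (R : realType) (S : finType) (r : S -> S -> R)
    (d : nat -> R) (A : {set S}) (w x y : S) :
  (forall a b, 0 <= r a b) -> (forall a, r a a = 0) -> irreducible_rates r ->
  (forall N, 0 < d N) -> d @ \oo --> 0 ->
  w \in A -> x != y -> 0 < r y x -> r y x < r x y ->
  let q := r y x / r x y in
  let P := fun (N : nat) (eta : config S) => probE0 (d N) r N A w eta in
  exists C : R, exists N0 : nat, forall N : nat, (N0 <= N)%N ->
    `| P N (zeta N 1 x y) - (q - q ^+ N) / (1 - q ^+ N) * P N (xi N x)
        - (1 - q) / (1 - q ^+ N) * P N (xi N y) | <= C * (d N * ln (N%:R))
    /\
    `| P N (zeta N N.-1 x y) - (q ^+ N.-1 - q ^+ N) / (1 - q ^+ N) * P N (xi N x)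
        - (1 - q ^+ N.-1) / (1 - q ^+ N) * P N (xi N y) | <= C * (d N * ln (N%:R)).
Proof.
move=> r_ge0 _ _ d_gt0 d_cvg0 wA xy ryx_gt0 ryx_lt q P.
have rxy_gt0 : 0 < r x y := lt_trans ryx_gt0 ryx_lt.
have q_gt0 : 0 < q by rewrite divr_gt0.
have q_lt1 : q < 1 by rewrite ltr_pdivrMr // mul1r.
have ryxE : r y x = q * r x y by rewrite divfK // lt0r_neq0.
have rho_ge0 : 0 <= \sum_(ab : S * S) r ab.1 ab.2 by rewrite sumr_ge0.
have gap_gt0 : 0 < (1 - q) / 2 by rewrite divr_gt0 // subr_gt0.
have [N1 qd_small] := cvg0_eventually_mul_le d_cvg0 q_gt0 gap_gt0.
set K := 8 * (r x y + \sum_(ab : S * S) r ab.1 ab.2) / ((1 - q) * r x y).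
exists (K * ((ln 2)^-1 + 1)), (maxn 2 N1) => N; rewrite geq_max => /andP[N2 NN1].
have balance i := probE0_zeta_balance (N := N) r_ge0 (ltW (d_gt0 N)) wA xy rxy_gt0 (i := i).
rewrite ryxE in balance.
have := perturbed_ruin_bound (h := fun i => P N (zeta N i x y)) (ltnW N2) (ltW (d_gt0 N))
  rxy_gt0 (ltW q_gt0) q_lt1 rho_ge0 (qd_small N NN1)
  (probE0_ge0_le1 N r_ge0 (ltW (d_gt0 N)) wA _) (probE0_ge0_le1 N r_ge0 (ltW (d_gt0 N)) wA _)
  balance.
rewrite /= zeta0E zetaNE // -/K.
have scale : K * (d N * (1 + ln N%:R)) <= K * ((ln 2)^-1 + 1) * (d N * ln N%:R).
  have K_ge0 : 0 <= K.
    by rewrite divr_ge0 ?mulr_ge0 ?(addr_ge0 (ltW rxy_gt0)) ?subr_ge0 ?(ltW q_lt1) ?(ltW rxy_gt0).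
  by rewrite -mulrA ler_wpM2l // mulrCA ler_wpM2l ?one_add_ln_le // ltW.
by case=> bound1 boundN; split; [exact: le_trans bound1 scale | exact: le_trans boundN scale].
Qed.
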